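(* Let $n\in\mathbb N$, let $\varphi\in\mathscr S_M(\mathbb R)$ be even and real-valued, and let $\varepsilon>0$. Then the map $T_\varepsilon:\mathscr P_n(\mathbb R)\to\mathscr P_n(\mathbb R)$, $T_\varepsilon(p)=p*\varphi_\varepsilon$, is a linear bijection (an automorphism of $\mathscr P_n(\mathbb R)$). Moreover, for $p\in\mathscr P_n(\mathbb R)$, with $p_0:=p$, $p_{j+1}:=T_\varepsilon(p_j)-p_j$ and $T_\varepsilon^0:=\mathrm{id}$: if $n$ is even, $$T_\varepsilon^{-1}(p)=\sum_{j=0}^{n/2}(-1)^jp_j=\sum_{j=0}^{n/2}\sum_{k=0}^{j}(-1)^{j+k}\binom{j}{k}T_\varepsilon^{\,j-k}(p)=\sum_{j=0}^{n/2}(-1)^{n/2-j}\binom{n/2+1}{j}T_\varepsilon^{\,n/2-j}(p);$$ if $n$ is odd, $$T_\varepsilon^{-1}(p)=\sum_{j=0}^{(n-1)/2}(-1)^jp_j=\sum_{j=0}^{(n-1)/2}(-1)^{\frac{n-1}{2}-j}\binom{\frac{n+1}{2}}{j}T_\varepsilon^{\,\frac{n-1}{2}-j}(p).$$ Here $T_\varepsilon^m$ denotes the $m$-fold composition of $T_\varepsilon$.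
   Context: $\mathscr S_M(\mathbb R)=\{f\in\mathscr S(\mathbb R): \int_{\mathbb R}f=1\}$, where $\mathscr S(\mathbb R)$ is the Schwartz space. $\varphi_\varepsilon(x):=\frac1\varepsilon\varphi(x/\varepsilon)$ for $\varepsilon>0$. $\mathscr P_n(\mathbb R)$ is the real vector space of real polynomials of degree at most $n$. Convolution: $(f*g)(x)=\int_{\mathbb R}f(x-y)g(y)\,dy$. *)

From HB Require Import structures.
From mathcomp Require Import all_boot all_order all_algebra.
From mathcomp Require Import all_classical all_reals all_analysis.
Set Implicit Arguments. Unset Strict Implicit. Unset Printing Implicit Defensive.
Import Order.TTheory GRing.Theory Num.Theory.
Local Open Scope ring_scope.
Local Open Scope classical_set_scope.

Section Defs.
Variable R : realType.

Definition schwartz (f : R -> R) : Prop :=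
  (forall (m : nat) (x : R), derivable (derive1n m f) x 1) /\
  (forall k m : nat, exists C : R, forall x : R,
      `|x| ^+ k * `|derive1n m f x| <= C).

Definition schwartzM (f : R -> R) : Prop :=
  schwartz f /\ (\int[@lebesgue_measure R]_x (f x)%:E = 1%:E)%E.

Definition even_fun (f : R -> R) : Prop := forall x, f (- x) = f x.

Definition dilate (phi : R -> R) (eps : R) : R -> R :=
  fun x => eps^-1 * phi (x / eps).

Definition conv (f g : R -> R) : R -> R :=
  fun x => Rintegral (@lebesgue_measure R) setT (fun y => f (x - y) * g y).

Definition Pn (n : nat) : set (R -> R) :=
  [set f | exists p : {poly R}, (size p <= n.+1)%N /\ f = (fun x => p.[x])].

Definition Teps (phi : R -> R) (eps : R) (f : R -> R) : R -> R :=
  conv f (dilate phi eps).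

Fixpoint pseq (T : (R -> R) -> (R -> R)) (p : R -> R) (j : nat) : R -> R :=
  match j with
  | 0 => p
  | j'.+1 => fun x => T (pseq T p j') x - pseq T p j' x
  end.

End Defs.

From Pilot Require Import Defs.
From HB Require Import structures.
From mathcomp Require Import all_boot all_order all_algebra.
From mathcomp Require Import all_classical all_reals all_analysis.
From mathcomp Require Import measurable_realfun.
From mathcomp Require Import ring lra zify.
Set Implicit Arguments. Unset Strict Implicit. Unset Printing Implicit Defensive.
Import Order.TTheory GRing.Theory Num.Theory numFieldNormedType.Exports.
Local Open Scope ring_scope.
Local Open Scope classical_set_scope.

(* On polynomials of degree at most n, Taylor expansion of p(x - y) turns
   T p = p * phi_eps into sum_i (-1)^i m_i p^(i) / i!, where m_i are the
   moments of phi_eps.  Since m_0 = 1 and m_1 = 0 (phi is even), N := T - 1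
   lowers the degree by 2, so N^(m+1) = 0 as soon as n < 2(m+1) and
   T = 1 + N is inverted by the Neumann sum sum_{j <= m} (-N)^j.  Writing
   every such operator as g(T) for a polynomial g, the remaining formulas are
   the polynomial identities (1 - X)^j = sum_k (-1)^(j+k) C(j,k) X^(j-k) and
   X sum_{j <= m} (1 - X)^j = 1 - (1 - X)^(m+1). *)

Section oneBX_identities.
Variable K : idomainType.

Lemma scale_sign_exprBX1 j :
  (-1) ^+ j *: ('X - 1) ^+ j = (1 - 'X) ^+ j :> {poly K}.
Proof. by rewrite -exprZn scaleN1r opprB. Qed.

Lemma mulX_sum_exp_oneBX k :
  'X * \sum_(j < k) (1 - 'X) ^+ j = 1 - (1 - 'X) ^+ k :> {poly K}.
Proof.
elim: k => [|k IH]; first by rewrite big_ord0 mulr0 expr0 subrr.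
by rewrite big_ord_recr /= mulrDr IH exprSr; ring.
Qed.

Lemma exp_oneBX_binomial j :
  (1 - 'X) ^+ j =
  \sum_(k < j.+1) ((-1) ^+ (j + k) * ('C(j, k))%:R) *: 'X^(j - k) :> {poly K}.
Proof.
rewrite -scale_sign_exprBX1 exprBn scaler_sumr; apply: eq_bigr => k _.
rewrite expr1n mulr1 -mulr_natr -!mul_polyC !rmorphM !rmorphXn /= rmorphN1.
by rewrite rmorph_nat exprD; ring.
Qed.

Lemma sum_exp_oneBX_binomial m :
  \sum_(j < m.+1) (1 - 'X) ^+ j =
  \sum_(j < m.+1) ((-1) ^+ (m - j) * ('C(m.+1, j))%:R) *: 'X^(m - j) :> {poly K}.
Proof.
apply: (@mulfI _ 'X); first by rewrite polyX_eq0.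
rewrite mulX_sum_exp_oneBX mulr_sumr (reindex_inj rev_ord_inj) /=.
rewrite [1 - 'X]addrC exprD1n big_ord_recl /= expr0 bin0 mulr1n opprD addrA.
rewrite subrr add0r -sumrN; apply: eq_bigr => i _; rewrite /bump /= add1n subSS.
have le_im : (i <= m)%N by rewrite -ltnS.
rewrite subKn // -subSS bin_sub // -mulr_natr -!mul_polyC !rmorphM !rmorphXn /=.
by rewrite rmorphN1 rmorph_nat exprNn !exprS; ring.
Qed.

End oneBX_identities.

Section horner_iter.
Variables (K : comNzRingType) (T : {poly K} -> {poly K}).
Implicit Types b f g : {poly K}.

Definition horner_iter (b g : {poly K}) : {poly K} :=
  \sum_(i < size g) g`_i *: iter i T b.

Lemma horner_iter_wide b g k : (size g <= k)%N ->
  horner_iter b g = \sum_(i < k) g`_i *: iter i T b.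
Proof.
move=> le_gk; rewrite /horner_iter (big_ord_widen k (fun i => g`_i *: iter i T b)) //.
rewrite big_mkcond; apply: eq_bigr => i _; case: ltnP => // le_gi.
by rewrite nth_default // scale0r.
Qed.

Lemma horner_iter_is_linear b : linear (horner_iter b).
Proof.
move=> a f g; set k := maxn (size f) (size g).
have le_fgk : (size (a *: f + g)%R <= k)%N.
  rewrite (leq_trans (size_polyD _ _)) // geq_max leq_maxr.
  by rewrite (leq_trans (size_scale_leq _ _)) ?leq_maxl.
rewrite !(@horner_iter_wide b _ k) ?leq_maxl ?leq_maxr // scaler_sumr -big_split.
by apply: eq_bigr => i _; rewrite coefD coefZ scalerDl scalerA.
Qed.

End horner_iter.

HB.instance Definition _ (K : comNzRingType) (T : {poly K} -> {poly K}) b :=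
  GRing.isLinear.Build K {poly K} {poly K} _ (horner_iter T b)
    (horner_iter_is_linear T b).

Section nearly_identity_operator.
Variables (K : idomainType) (T : {linear {poly K} -> {poly K}}).
Hypothesis size_T_subr : forall r, (size (T r - r)%R <= size r - 2)%N.
Implicit Types b g r : {poly K}.
Local Notation hT := (horner_iter T).

Lemma size_T r : (size (T r) <= size r)%N.
Proof.
rewrite -[T r](subrK r) (leq_trans (size_polyD _ _)) // geq_max leqnn andbT.
by rewrite (leq_trans (size_T_subr r)) ?leq_subr.
Qed.

Lemma size_iter_T k r : (size (iter k T r) <= size r)%N.
Proof. by elim: k => [|k IH] //=; rewrite (leq_trans (size_T _)). Qed.

Lemma size_horner_iter b g : (size (hT b g) <= size b)%N.
Proof.
rewrite (leq_trans (size_sum _ _ _)) //; apply/bigmax_leqP => i _.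
by rewrite (leq_trans (size_scale_leq _ _)) ?size_iter_T.
Qed.

Lemma horner_iter1 b : hT b 1 = b.
Proof. by rewrite /horner_iter size_poly1 big_ord1 coefC /= scale1r. Qed.

Lemma horner_iter_mulX b g :
  hT b ('X * g) = \sum_(i < size g) g`_i *: iter i.+1 T b.
Proof.
rewrite (@horner_iter_wide _ _ _ _ (size g).+1); last first.
  by have [->|nz_g] := eqVneq g 0; rewrite ?mulr0 ?size_poly0 // mulrC size_mulX.
by rewrite big_ord_recl coefXM scale0r add0r; apply: eq_bigr => i _; rewrite coefXM.
Qed.

Lemma horner_iterXM b g : hT b ('X * g) = T (hT b g).
Proof.
rewrite horner_iter_mulX linear_sum; apply: eq_bigr => i _.
by rewrite linearZ.
Qed.

Lemma horner_iter_T b g : hT (T b) g = hT b ('X * g).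
Proof. by rewrite horner_iter_mulX; apply: eq_bigr => i _; rewrite iterSr. Qed.

Lemma horner_iterXn b k : hT b 'X^k = iter k T b.
Proof.
elim: k => [|k IH]; first by rewrite expr0 horner_iter1.
by rewrite exprS horner_iterXM IH.
Qed.

Lemma horner_iter_subX1M b g : hT b (('X - 1) * g) = T (hT b g) - hT b g.
Proof. by rewrite mulrBl mul1r linearB /= horner_iterXM. Qed.

Lemma size_horner_iter_exprBX1 b k :
  (size (hT b (('X - 1) ^+ k)) <= size b - k.*2)%N.
Proof.
elim: k => [|k IH]; first by rewrite expr0 horner_iter1 subn0.
rewrite exprS horner_iter_subX1M; apply: (leq_trans (size_T_subr _)).
by move: IH; move: (size (hT b _)) (size b) => s t; lia.
Qed.

Lemma horner_iter_exprBX1_eq0 b k : (size b <= k.*2)%N -> hT b (('X - 1) ^+ k) = 0.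
Proof.
move=> le_bk; apply/eqP; rewrite -size_poly_leq0.
by rewrite (leq_trans (size_horner_iter_exprBX1 b k)) //; move: le_bk; lia.
Qed.

Lemma horner_iter_mulX_sum_exp_oneBX b m : (size b <= m.+1.*2)%N ->
  hT b ('X * \sum_(j < m.+1) (1 - 'X) ^+ j) = b.
Proof.
move=> le_bm; rewrite mulX_sum_exp_oneBX linearB /= horner_iter1.
by rewrite -scale_sign_exprBX1 linearZ /= horner_iter_exprBX1_eq0 // scaler0 subr0.
Qed.

End nearly_identity_operator.

Section lebesgue_measure_lemmas.
Variable R : realType.
Local Notation mu := (@lebesgue_measure R).

Lemma integrable_oneDsqrV :
  mu.-integrable setT (EFin \o (fun y : R => (oneDsqr y)^-1)).
Proof.
have mf : measurable_fun setT (fun y : R => (oneDsqr y)^-1).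
  by apply: continuous_measurable_fun; exact: continuous_oneDsqrV.
apply/integrableP; split; first exact/measurable_EFinP.
have oneDsqrV_ge0 y : 0 <= (oneDsqr y)^-1.
  by rewrite invr_ge0 (le_trans _ (oneDsqr_ge1 y)).
under eq_integral do rewrite /= ger0_norm ?oneDsqrV_ge0//.
have -> : [set: R] = `]-oo, 0[ `|` `[0, +oo[.
  apply/seteqP; split => x //= _; rewrite !in_itv /= !andbT.
  by case: (ltP x 0) => h; [left|right].
rewrite ge0_integral_setU//=; last 2 first.
- by apply/measurable_EFinP; exact: measurable_funTS.
- apply/disj_setPS => x [] /=; rewrite !in_itv/= andbT => h1 h2.
  by move: (lt_le_trans h1 h2); rewrite ltxx.
have int0y := @integral0y_oneDsqr R.
have intNy0 : (\int[mu]_(x in `]-oo, 0%R]) (oneDsqr x)^-1%:E = (pi / 2)%:E)%E.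
  rewrite -int0y ge0_integration_by_substitution0//=.
  - by apply: eq_integral => x _; rewrite /oneDsqr sqrrN.
  - exact/measurable_EFinP.
apply: (@le_lt_trans _ _ ((pi / 2)%:E + (pi / 2)%:E)%E); last by rewrite -EFinD ltry.
apply: leeD; last by rewrite int0y.
rewrite -intNy0; apply: ge0_subset_integral => //=.
- exact/measurable_EFinP/measurable_funTS.
- by move=> x /=; rewrite !in_itv/= => /ltW.
Qed.

Lemma continuous_divr (eps : R) : continuous (fun y : R => y / eps).
Proof.
move=> x; apply: (@continuousM R R id (fun=> eps^-1)); first exact: cvg_id.
exact: cvg_cst.
Qed.

Lemma pushforward_lebesgue_divr (eps : R) (A : set R) : 0 < eps -> measurable A ->
  pushforward mu (fun y : R => y / eps) A = (eps%:E * mu A)%E.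
Proof.
move=> eps_gt0 mA.
have epsV_ge0 : 0 <= eps^-1 by rewrite invr_ge0 ltW.
have scaled_lebesgue : mu A = mscale (NngNum epsV_ge0)
    (pushforward mu ((fun y : R => y / eps) : _ -> measurableTypeR R)) A.
  move=> mdiv; apply: lebesgue_measure_unique => // _ [[a b] _ <-].
  rewrite /= /mscale /pushforward /=.
  rewrite [X in (_ * mu X)%E](_ : _ = `]a * eps, b * eps]%classic); last first.
    by apply/seteqP; split => y /=; rewrite !in_itv /= ltr_pdivlMr // ler_pdivrMr.
  rewrite !lebesgue_measure_itv /= !lte_fin ltr_pM2r //.
  case: ifP => _; last by rewrite mule0.
  by rewrite -EFinB -EFinM; congr EFin; field; rewrite gt_eqF.
have mdiv : measurable_fun setT (fun y : R => y / eps).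
  by apply: continuous_measurable_fun; exact: continuous_divr.
by rewrite (scaled_lebesgue mdiv) /= /mscale muleA -EFinM mulfV ?gt_eqF // mul1e.
Qed.

Lemma Rintegral_comp_divr (eps : R) (f : R -> R) : 0 < eps ->
  mu.-integrable setT (EFin \o f) ->
  mu.-integrable setT (EFin \o (fun y => f (y / eps))) ->
  \int[mu]_y f (y / eps) = eps * \int[mu]_y f y.
Proof.
move=> eps_gt0 intf intfdiv.
have mdiv : measurable_fun setT (fun y : R => y / eps).
  by apply: continuous_measurable_fun; exact: continuous_divr.
have mf : measurable_fun setT (EFin \o f) by case/integrableP: intf.
have := @integral_pushforward _ _ (measurableTypeR R) (measurableTypeR R) R _
  mdiv mu setT (EFin \o f) mf.
rewrite preimage_setT => /(_ intfdiv measurableT) /= push.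
rewrite /Rintegral -push (eq_measure_integral (mscale (NngNum (ltW eps_gt0)) mu)).
  rewrite integralE !ge0_integral_mscale //=; last 2 first.
  - exact: measurable_funeneg.
  - exact: measurable_funepos.
  rewrite -muleBr // -?integralE; last first.
    by rewrite fin_num_adde_defl // fin_numN integrable_neg_fin_num.
  by rewrite fineM // integrable_fin_num.
by move=> A mA _; exact: pushforward_lebesgue_divr.
Qed.

Lemma Rintegral_odd (g : R -> R) : mu.-integrable setT (EFin \o g) ->
  (forall y, g (- y) = - g y) -> \int[mu]_y g y = 0.
Proof.
move=> intg g_odd.
have mg : measurable_fun setT (EFin \o g) by case/integrableP: intg.
have mN : measurable_fun setT (-%R : R -> R).
  by apply: continuous_measurable_fun; exact: opp_continuous.
have intgN : mu.-integrable ((-%R) @^-1` setT) ((EFin \o g) \o (-%R)).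
  rewrite preimage_setT; have := integrableN intg.
  by apply: eq_integrable => // y _ /=; rewrite g_odd.
have reflect_g : (\int[mu]_y (g y)%:E = \int[mu]_y (g (- y))%:E)%E.
  rewrite (eq_measure_integral (pushforward mu (-%R : _ -> measurableTypeR R))).
    have := @integral_pushforward _ _ (measurableTypeR R) (measurableTypeR R) R _
      mN mu setT (EFin \o g) mg intgN measurableT.
    by rewrite preimage_setT.
  by move=> A mA _; exact/esym/lebesgue_measureN.
have : \int[mu]_y g y = - \int[mu]_y g y.
  rewrite {1}/Rintegral reflect_g; under eq_integral do rewrite g_odd -mulN1r.
  by rewrite -/(Rintegral _ _ _) RintegralZl // mulN1r.
lra.
Qed.

End lebesgue_measure_lemmas.

Section Rintegral_sum.
Context d (T : measurableType d) (R : realType).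
Variables (mu : {measure set T -> \bar R}) (D : set T).
Hypothesis mD : measurable D.

Lemma Rintegral_sum (I : Type) (s : seq I) (f : I -> T -> R) :
  (forall i, mu.-integrable D (EFin \o f i)) ->
  \int[mu]_(x in D) (\sum_(i <- s) f i x) = \sum_(i <- s) \int[mu]_(x in D) f i x.
Proof.
move=> intf; elim: s => [|a s IH].
  by under eq_Rintegral do rewrite big_nil; rewrite big_nil /Rintegral integral0.
under eq_Rintegral do rewrite big_cons.
rewrite RintegralD //; first by rewrite IH big_cons.
have := @integrable_sum _ _ R mu D mD I s xpredT (fun i => EFin \o f i)
  (fun i _ => intf i).
by apply: eq_integrable => // x _ /=; rewrite sumEFin.
Qed.

End Rintegral_sum.

Section dilate_moments.
Variables (R : realType) (phi : R -> R) (eps : R).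
Hypotheses (phiS : schwartz phi) (eps_gt0 : 0 < eps).
Local Notation mu := (@lebesgue_measure R).
Local Notation phie := (dilate phi eps).

Lemma continuous_schwartz : continuous phi.
Proof.
move=> x; apply: differentiable_continuous; apply/derivable1_diffP.
exact: (phiS.1 0%N x).
Qed.

Lemma continuous_dilate : continuous phie.
Proof.
move=> x; apply: (@continuousM R R (fun=> eps^-1) (fun y => phi (y / eps))).
  exact: cvg_cst.
apply: (@continuous_comp R R R (fun y => y / eps) phi); last exact: continuous_schwartz.
exact: continuous_divr.
Qed.

(* The decay of [phi] at order [i + 2] dominates [y ^+ i * phie y] by the
   integrable function [1 / (1 + y ^ 2)]. *)
Lemma dilate_moment_le i : exists C, forall y : R,
  `|y ^+ i * phie y| <= C * (oneDsqr y)^-1.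
Proof.
have [C1 decay_i] := phiS.2 i 0%N.
have [C2 decay_i2] := phiS.2 i.+2 0%N.
exists (eps^-1 * eps ^+ i * C1 + eps^-1 * eps ^+ i.+2 * C2) => y.
have oneDsqr_gt0 : 0 < oneDsqr y by apply: lt_le_trans (oneDsqr_ge1 y).
rewrite ler_pdivlMr // mulrC.
have [z ->] : exists z, y = eps * z.
  by exists (y / eps); rewrite mulrCA divff ?gt_eqF // mulr1.
have epsV_gt0 : 0 < eps^-1 by rewrite invr_gt0.
rewrite /dilate /oneDsqr [eps * z]mulrC mulfK ?gt_eqF // [z * eps]mulrC.
rewrite !(normrM, normrX) (gtr0_norm eps_gt0) (gtr0_norm epsV_gt0) exprMn.
have -> : (1 + eps ^+ 2 * z ^+ 2) * ((eps * `|z|) ^+ i * (eps^-1 * `|phi z|)) =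
    eps^-1 * eps ^+ i * (`|z| ^+ i * `|phi z|) +
    eps^-1 * eps ^+ i.+2 * (`|z| ^+ i.+2 * `|phi z|).
  rewrite -[z ^+ 2]real_normK ?num_real // exprMn !exprS; ring.
by apply: lerD; apply: ler_wpM2l => //; rewrite mulr_ge0 ?invr_ge0 ?exprn_ge0 ?ltW.
Qed.

Lemma integrable_dilate_moment i :
  mu.-integrable setT (EFin \o (fun y => y ^+ i * phie y)).
Proof.
have [C le_C] := dilate_moment_le i.
apply: (@le_integrable _ _ _ mu setT measurableT _
  (EFin \o (fun y => C * (oneDsqr y)^-1))).
- apply/measurable_EFinP; apply: continuous_measurable_fun => x.
  apply: (@continuousM R R (fun y => y ^+ i) phie); first exact: exprn_continuous.
  exact: continuous_dilate.
- by move=> y _ /=; rewrite lee_fin (le_trans (le_C y)) ?ler_norm.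
- have := integrableZl measurableT C (integrable_oneDsqrV R).
  by apply: eq_integrable.
Qed.

End dilate_moments.

Definition moment (R : realType) (f : R -> R) (i : nat) : R :=
  \int[@lebesgue_measure R]_y (y ^+ i * f y).

Section dilate_low_moments.
Variables (R : realType) (phi : R -> R) (eps : R).
Hypothesis eps_gt0 : 0 < eps.
Local Notation mu := (@lebesgue_measure R).

Lemma moment0_dilate : schwartzM phi -> moment (dilate phi eps) 0 = 1.
Proof.
case=> phiS int_phi.
have int_phi1 : mu.-integrable setT (EFin \o phi).
  have := integrable_dilate_moment phiS ltr01 0.
  by apply: eq_integrable => // y _ /=; rewrite /dilate invr1 mulr1 expr0 !mul1r.
have int_phidiv : mu.-integrable setT (EFin \o (fun y => phi (y / eps))).
  have := integrableZl measurableT eps (integrable_dilate_moment phiS eps_gt0 0).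
  apply: eq_integrable => // y _ /=; rewrite /dilate expr0 mul1r -EFinM.
  by rewrite mulrA mulfV ?gt_eqF // mul1r.
rewrite /moment; under eq_Rintegral do rewrite expr0 mul1r.
rewrite RintegralZl // Rintegral_comp_divr // /Rintegral int_phi /=.
by rewrite mulKf ?gt_eqF.
Qed.

Lemma moment1_dilate : schwartz phi -> even_fun phi -> moment (dilate phi eps) 1 = 0.
Proof.
move=> phiS phi_even; apply: Rintegral_odd; first exact: integrable_dilate_moment.
by move=> y; rewrite /dilate [- y / eps]mulNr phi_even !expr1 mulNr.
Qed.

End dilate_low_moments.

Section convolution_with_polynomials.
Variables (R : realType) (f : R -> R).
Local Notation mu := (@lebesgue_measure R).

Definition conv_poly (N : nat) (r : {poly R}) : {poly R} :=
  \sum_(i < N) ((-1) ^+ i * moment f i) *: r^`N(i).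

Lemma conv_poly_is_linear N : linear (conv_poly N).
Proof.
move=> a p q; rewrite /conv_poly scaler_sumr -big_split; apply: eq_bigr => i _.
by rewrite linearP scalerDr !scalerA mulrC.
Qed.

(* Taylor expansion of [r (x - y)] at [x]. *)
Lemma conv_horner N (r : {poly R}) :
  (forall i, mu.-integrable setT (EFin \o (fun y => y ^+ i * f y))) ->
  (size r <= N)%N -> Defs.conv (fun x => r.[x]) f = (fun x => (conv_poly N r).[x]).
Proof.
move=> int_moment le_rN; apply/funext => x; rewrite /Defs.conv /conv_poly horner_sum.
have taylor y : r.[x - y] * f y =
    \sum_(i < N) (r^`N(i).[x] * (-1) ^+ i) * (y ^+ i * f y).
  rewrite (nderiv_taylor_wide (mulrC x (- y)) le_rN) big_distrl /=.
  by apply: eq_bigr => i _; rewrite [(- y) ^+ i]exprNn; ring.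
under eq_Rintegral do rewrite taylor.
rewrite Rintegral_sum //; last first.
  move=> i; have := integrableZl measurableT (r^`N(i).[x] * (-1) ^+ i) (int_moment i).
  by apply: eq_integrable => // y _ /=; rewrite EFinM.
apply: eq_bigr => i _; rewrite RintegralZl // hornerZ /moment; ring.
Qed.

Lemma size_conv_polyB N (r : {poly R}) : moment f 0 = 1 -> moment f 1 = 0 ->
  (size (conv_poly N.+2 r - r)%R <= size r - 2)%N.
Proof.
move=> moment0 moment1.
rewrite /conv_poly !big_ord_recl /= moment0 moment1 mulr0 scale0r mulr1 scale1r.
rewrite nderivn0 add0r addrC addKr (leq_trans (size_sum _ _ _)) //.
apply/bigmax_leqP => i _; rewrite (leq_trans (size_scale_leq _ _)) //.
by rewrite (leq_trans (size_poly _ _)) // /bump /=; lia.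
Qed.

End convolution_with_polynomials.

HB.instance Definition _ (R : realType) (f : R -> R) N :=
  GRing.isLinear.Build R {poly R} {poly R} _ (conv_poly f N) (conv_poly_is_linear f N).

Section Teps_on_polynomials.
Variables (R : realType) (n : nat) (phi : R -> R) (eps : R).
Hypotheses (phiS : schwartzM phi) (phi_even : even_fun phi) (eps_gt0 : 0 < eps).
Local Notation T := (Teps phi eps).
Local Notation P := (conv_poly (dilate phi eps) n.+3).
Local Notation hP := (horner_iter P).
Implicit Types b r : {poly R}.

Lemma size_conv_poly_dilateB r : (size (P r - r)%R <= size r - 2)%N.
Proof.
by apply: size_conv_polyB; rewrite ?moment0_dilate ?moment1_dilate //; case: phiS.
Qed.

Lemma Teps_horner r : (size r <= n.+1)%N -> T (fun x => r.[x]) = (fun x => (P r).[x]).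
Proof.
move=> le_rn; apply: conv_horner; first exact: integrable_dilate_moment phiS.1 eps_gt0.
by move: le_rn; lia.
Qed.

Lemma iter_Teps_horner k b : (size b <= n.+1)%N ->
  iter k T (fun x => b.[x]) = (fun x => (iter k P b).[x]).
Proof.
move=> le_bn; elim: k => [|k IH] //=.
by rewrite IH Teps_horner // (leq_trans (size_iter_T size_conv_poly_dilateB _ _)).
Qed.

Lemma pseq_Teps_horner b j : (size b <= n.+1)%N ->
  pseq T (fun x => b.[x]) j = (fun x => (hP b (('X - 1) ^+ j)).[x]).
Proof.
move=> le_bn; elim: j => [|j IH] /=; first by rewrite expr0 horner_iter1.
rewrite IH Teps_horner ?(leq_trans (size_horner_iter size_conv_poly_dilateB _ _)) //.
by apply/funext => x; rewrite exprS horner_iter_subX1M hornerD hornerN.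
Qed.

Lemma sum_pseq_Teps_horner m b : (size b <= n.+1)%N ->
  (fun x => \sum_(0 <= j < m.+1) (-1) ^+ j * pseq T (fun x => b.[x]) j x) =
  (fun x => (hP b (\sum_(j < m.+1) (1 - 'X) ^+ j)).[x]).
Proof.
move=> le_bn; apply/funext => x; rewrite big_mkord linear_sum horner_sum.
apply: eq_bigr => j _.
by rewrite -scale_sign_exprBX1 linearZ hornerZ pseq_Teps_horner.
Qed.

Lemma Pn_Teps f : Pn n f -> Pn n (T f).
Proof.
case=> r [le_rn ->]; exists (P r); split; last exact: Teps_horner.
exact: leq_trans (size_T size_conv_poly_dilateB r) le_rn.
Qed.

Lemma Teps_linear a f g : Pn n f -> Pn n g ->
  T (fun x => a * f x + g x) = (fun x => a * T f x + T g x).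
Proof.
case=> r [le_rn ->] [s [le_sn ->]].
have le_rsn : (size (a *: r + s)%R <= n.+1)%N.
  rewrite (leq_trans (size_polyD _ _)) // geq_max le_sn.
  by rewrite (leq_trans (size_scale_leq _ _)).
have -> : (fun x => a * r.[x] + s.[x]) = (fun x => (a *: r + s).[x]).
  by apply/funext => x; rewrite hornerD hornerZ.
by rewrite !Teps_horner // linearP; apply/funext => x; rewrite hornerD hornerZ.
Qed.

Lemma Teps_inverse m p q : (n.+1 <= m.+1.*2)%N -> Pn n q -> T q = p ->
  q = (fun x => \sum_(0 <= j < m.+1) (-1) ^+ j * pseq T p j x).
Proof.
move=> le_nm [r [le_rn ->]] <-.
have le_Prn := leq_trans (size_T size_conv_poly_dilateB r) le_rn.
rewrite Teps_horner // sum_pseq_Teps_horner // horner_iter_T.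
by rewrite (horner_iter_mulX_sum_exp_oneBX size_conv_poly_dilateB (leq_trans le_rn le_nm)).
Qed.

Lemma Teps_bij : set_bij (Pn n) (Pn n) T.
Proof.
have le_nn : (n.+1 <= n.+1.*2)%N by lia.
split; first by move=> f /Pn_Teps.
- move=> f g /set_mem Pf /set_mem Pg Tfg.
  by rewrite (Teps_inverse le_nn Pf erefl) (Teps_inverse le_nn Pg erefl) Tfg.
- move=> _ [b [le_bn ->]].
  pose S : {poly R} := \sum_(j < n.+1) (1 - 'X) ^+ j.
  have le_hbn : (size (hP b S) <= n.+1)%N.
    exact: leq_trans (size_horner_iter size_conv_poly_dilateB _ _) le_bn.
  exists (fun x => (hP b S).[x]); first by exists (hP b S).
  rewrite Teps_horner // -horner_iterXM.
  by rewrite (horner_iter_mulX_sum_exp_oneBX size_conv_poly_dilateB (leq_trans le_bn le_nn)).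
Qed.

Lemma sum_pseq_double_binomial m p : Pn n p ->
  (fun x => \sum_(0 <= j < m.+1) (-1) ^+ j * pseq T p j x) =
  (fun x => \sum_(0 <= j < m.+1) \sum_(0 <= k < j.+1)
     (-1) ^+ (j + k) * ('C(j, k))%:R * iter (j - k) T p x).
Proof.
case=> b [le_bn ->]; rewrite sum_pseq_Teps_horner //; apply/funext => x.
rewrite big_mkord linear_sum horner_sum; apply: eq_bigr => j _.
rewrite exp_oneBX_binomial big_mkord linear_sum horner_sum; apply: eq_bigr => k _.
by rewrite linearZ /= hornerZ horner_iterXn iter_Teps_horner.
Qed.

Lemma sum_pseq_binomial m p : Pn n p ->
  (fun x => \sum_(0 <= j < m.+1) (-1) ^+ j * pseq T p j x) =
  (fun x => \sum_(0 <= j < m.+1)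
     (-1) ^+ (m - j) * ('C(m.+1, j))%:R * iter (m - j) T p x).
Proof.
case=> b [le_bn ->]; rewrite sum_pseq_Teps_horner // sum_exp_oneBX_binomial.
apply/funext => x; rewrite big_mkord linear_sum horner_sum; apply: eq_bigr => j _.
by rewrite linearZ /= hornerZ horner_iterXn iter_Teps_horner.
Qed.

End Teps_on_polynomials.

Theorem mainTheorem5 (R : realType) (n : nat) (phi : R -> R) (eps : R) :
  schwartzM phi -> even_fun phi -> 0 < eps ->
  let T := Teps phi eps in
  set_bij (Pn n) (Pn n) T /\
  (forall (a : R) (f g : R -> R), Pn n f -> Pn n g ->
     T (fun x => a * f x + g x) = (fun x => a * T f x + T g x)) /\
  (forall p q : R -> R, Pn n p -> Pn n q -> T q = p ->
     (~~ odd n ->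
        (q = (fun x => \sum_(0 <= j < (n %/ 2).+1) (-1) ^+ j * pseq T p j x)) /\
        ((fun x => \sum_(0 <= j < (n %/ 2).+1) (-1) ^+ j * pseq T p j x) =
         (fun x => \sum_(0 <= j < (n %/ 2).+1) \sum_(0 <= k < j.+1)
                     (-1) ^+ (j + k) * ('C(j, k))%:R * iter (j - k) T p x)) /\
        ((fun x => \sum_(0 <= j < (n %/ 2).+1) \sum_(0 <= k < j.+1)
                     (-1) ^+ (j + k) * ('C(j, k))%:R * iter (j - k) T p x) =
         (fun x => \sum_(0 <= j < (n %/ 2).+1)
                     (-1) ^+ (n %/ 2 - j) * ('C((n %/ 2).+1, j))%:R
                       * iter (n %/ 2 - j) T p x))) /\
     (odd n ->
        (q = (fun x => \sum_(0 <= j < (n.-1 %/ 2).+1) (-1) ^+ j * pseq T p j x)) /\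
        ((fun x => \sum_(0 <= j < (n.-1 %/ 2).+1) (-1) ^+ j * pseq T p j x) =
         (fun x => \sum_(0 <= j < (n.-1 %/ 2).+1)
                     (-1) ^+ (n.-1 %/ 2 - j) * ('C(n.+1 %/ 2, j))%:R
                       * iter (n.-1 %/ 2 - j) T p x)))).
Proof.
move=> phiS phi_even eps_gt0 T; rewrite {}/T.
split; first exact: Teps_bij.
split; first exact: Teps_linear.
move=> p q Pp Pq Tqp.
have inverse := fun m (le_nm : (n.+1 <= m.+1.*2)%N) =>
  Teps_inverse phiS phi_even eps_gt0 le_nm Pq Tqp.
have double m := sum_pseq_double_binomial phiS phi_even eps_gt0 m Pp.
have single m := sum_pseq_binomial phiS phi_even eps_gt0 m Pp.
split=> parity_n.
- have le_nm : (n.+1 <= (n %/ 2).+1.*2)%N by lia.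
  by split; [exact: inverse | rewrite -double; split=> //; exact: single].
- have le_nm : (n.+1 <= (n.-1 %/ 2).+1.*2)%N by lia.
  have -> : (n.+1 %/ 2 = (n.-1 %/ 2).+1)%N.
    by move: (odd_double_half n); rewrite parity_n; lia.
  by split; [exact: inverse | exact: single].
Qed.
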